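(* Let $G$ be a finite simple graph on the vertex set $[d]=\{1,\dots,d\}$, let $k\ge 1$, and let $f,g$ be $k$-colorings of $G$. Then $f\sim_k g$ if and only if ${\bf x}_f-{\bf x}_g\in J_G$.
   Context: A $k$-coloring of a graph $H$ is a map $f:V(H)\to[k]$ (not necessarily surjective) with $f(u)\neq f(v)$ for every edge $\{u,v\}$ of $H$. Given a $k$-coloring $f$ of $H$ and colors $1\le i<j\le k$, let $C$ be a connected component of the induced subgraph $H[f^{-1}(i)\cup f^{-1}(j)]$; the coloring that agrees with $f$ outside $C$ and interchanges the colors $i$ and $j$ on $C$ is said to be obtained from $f$ by a Kempe switching. Two $k$-colorings $f,g$ of $H$ are Kempe equivalent, written $f\sim_k g$, if there is a finite sequence $f=f_0,f_1,\dots,f_s=g$ of $k$-colorings of $H$ with each $f_i$ obtained from $f_{i-1}$ by a Kempe switching. A stable set of $G$ is a subset $S\subseteq[d]$ containing no edge of $G$ (so $\emptyset$ and all singletons are stable); $S(G)$ denotes the set of stable sets. Let $\mathbb{K}$ be a field and $R[G]=\mathbb{K}[x_S : S\in S(G)]$ the polynomial ring with one variable of degree $1$ for each stable set. For a $k$-coloring $f$ of an induced subgraph $G[W]$ ($W\subseteq[d]$) put ${\bf x}_f=\prod_{\ell=1}^k x_{f^{-1}(\ell)}$ (each $f^{-1}(\ell)$ is a stable set, possibly empty). The $2$-coloring ideal $J_G\subseteq R[G]$ is the ideal generated by all ${\bf x}_f-{\bf x}_g$ where $f,g$ are $2$-colorings of the same induced subgraph $G[W]$ of $G$ (equivalently,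 by all $x_{S_1}x_{S_2}-x_{S_3}x_{S_4}$ with $S_i\in S(G)$, $S_1\cap S_2=S_3\cap S_4=\emptyset$ and $S_1\cup S_2=S_3\cup S_4$). *)

From HB Require Import structures.
From mathcomp Require Import all_boot all_order all_algebra.
From mathcomp Require Import mpoly.
Set Implicit Arguments. Unset Strict Implicit. Unset Printing Implicit Defensive.
Import GRing.Theory.
Local Open Scope ring_scope.

(* A finite simple graph G on [d] is encoded by e : rel 'I_d (symmetric,
   irreflexive, assumed in the theorem).  Colors [k] are 'I_k. *)

Definition coloring (d k : nat) (e : rel 'I_d) (f : 'I_d -> 'I_k) : Prop :=
  forall u v, e u v -> f u != f v.

Definition stable (d : nat) (e : rel 'I_d) (S : {set 'I_d}) : bool :=
  [forall u in S, forall v in S, ~~ e u v].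

Definition stab (d : nat) (e : rel 'I_d) := {S : {set 'I_d} | stable e S}.

(* R[G] = K[x_S : S stable] *)
Definition RG (K : fieldType) (d : nat) (e : rel 'I_d) :=
  {mpoly K[#|{: stab e}|]}.

(* the variable x_S for S stable (junk value 0 for non-stable S, never used
   below since color classes of colorings are stable) *)
Definition xS (K : fieldType) (d : nat) (e : rel 'I_d) (S : {set 'I_d})
  : RG K e :=
  if @insub _ (stable e) (stab e) S is Some s then 'X_(enum_rank s) else 0.

Definition xmon (K : fieldType) (d k : nat) (e : rel 'I_d) (f : 'I_d -> 'I_k)
  : RG K e := \prod_(l < k) xS K e [set v | f v == l].

Definition coloring_on (d k : nat) (e : rel 'I_d) (W : {set 'I_d})
  (f : 'I_d -> 'I_k) : Prop :=
  forall u v, u \in W -> v \in W -> e u v -> f u != f v.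

Definition xmon_on (K : fieldType) (d k : nat) (e : rel 'I_d) (W : {set 'I_d})
  (f : 'I_d -> 'I_k) : RG K e := \prod_(l < k) xS K e [set v in W | f v == l].

Definition J_gens (K : fieldType) (d : nat) (e : rel 'I_d) (p : RG K e) : Prop :=
  exists (W : {set 'I_d}) (f g : 'I_d -> 'I_2),
    [/\ coloring_on e W f, coloring_on e W g &
        p = xmon_on K e W f - xmon_on K e W g].

Definition in_ideal (R : comRingType) (P : R -> Prop) (p : R) : Prop :=
  exists (n : nat) (c gs : 'I_n -> R),
    (forall i, P (gs i)) /\ p = \sum_(i < n) c i * gs i.

Definition J_G (K : fieldType) (d : nat) (e : rel 'I_d) : RG K e -> Prop :=
  in_ideal (@J_gens K d e).

Definition component_of (d : nat) (e : rel 'I_d) (A C : {set 'I_d}) : Prop :=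
  exists2 v, v \in A &
    C = [set w | connect [rel x y | [&& e x y, x \in A & y \in A]] v w].

Definition kempe_switch (d k : nat) (e : rel 'I_d) (f g : 'I_d -> 'I_k) : Prop :=
  exists (i j : 'I_k) (C : {set 'I_d}),
    [/\ (i < j)%N,
        component_of e [set v | (f v == i) || (f v == j)] C &
        forall v, g v = if v \in C then
                          (if f v == i then j else i)
                        else f v].

Inductive kempe_equiv (d k : nat) (e : rel 'I_d) :
    ('I_d -> 'I_k) -> ('I_d -> 'I_k) -> Prop :=
  | kempe_refl f : coloring e f -> kempe_equiv e f f
  | kempe_step f g h : coloring e f -> coloring e g -> kempe_switch e f g ->
      kempe_equiv e g h -> kempe_equiv e f h.

Arguments xS K {d} e S.
Arguments xmon K {d k} e f.
Arguments xmon_on K {d k} e W f.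
Arguments J_gens K {d} e p.
Arguments J_G K {d} e _.

From HB Require Import structures.
From mathcomp Require Import all_boot all_order all_algebra all_fingroup.
From mathcomp Require Import mpoly zify.
From Stdlib Require Import FunctionalExtensionality ClassicalEpsilon.
Set Implicit Arguments. Unset Strict Implicit. Unset Printing Implicit Defensive.
Import GRing.Theory.

(* Two k-colorings h, h' that differ only at vertices where both use colors
   among {i, j} are Kempe equivalent: switch, one at a time, the components of
   G[h^-1{i, j}] on which h and h' disagree.
   If g arises from f by a Kempe switch in colors i, j, then x_f and x_g share
   the factors x_{f^-1(l)} for l outside {i, j}, and the remaining factors are
   the monomials of two 2-colorings of G[f^-1{i, j}]; so x_f - x_g is in J_G.
   Conversely, let phi_f be the linear form summing the coefficients of the
   monomials x_h with h Kempe equivalent to f.  For a generator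
   x_{A0} x_{A1} - x_{B0} x_{B1} and a monomial x_t, the monomial
   x_t x_{A0} x_{A1} is some such x_h iff x_t x_{B0} x_{B1} is: recolor the two
   classes A0, A1 of h as B0, B1.  Hence phi_f vanishes on J_G, so
   phi_f(x_g) = phi_f(x_f) = 1 and x_g = x_h for some h ~ f.  Then g and h
   have the same color classes, and composing h with transpositions of colors,
   each a recoloring within two colors, turns h into g. *)

Section Colorings.
Variables (d k : nat) (e : rel 'I_d).
Implicit Types (f g h : 'I_d -> 'I_k) (i j l : 'I_k) (A B C W : {set 'I_d}).

Definition cls h l := [set v | h v == l].

Lemma stableP A :
  reflect (forall u v, u \in A -> v \in A -> ~~ e u v) (stable e A).
Proof.
apply: (iffP forallP) => [sA u v uA vA | sA u].
  by have /implyP /(_ uA) /forallP /(_ v) /implyP := sA u; apply.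
by apply/implyP => uA; apply/forallP => v; apply/implyP; apply: sA.
Qed.

Lemma stable0 : stable e set0.
Proof. by apply/stableP => u v; rewrite inE. Qed.

Lemma coloringP h : coloring e h <-> forall l, stable e (cls h l).
Proof.
split=> [hh l | sh u v euv].
  apply/stableP => u v; rewrite !inE => /eqP hu /eqP hv.
  by apply/negP => /hh; rewrite hu hv eqxx.
apply/eqP => huv; have /stableP/(_ u v) := sh (h u).
by rewrite !inE huv eqxx euv => /(_ isT isT).
Qed.

Lemma stable_coloring_on W (c : 'I_d -> 'I_k) l :
  coloring_on e W c -> stable e [set v in W | c v == l].
Proof.
move=> hc; apply/stableP => u v.
rewrite !inE => /andP[uW /eqP cu] /andP[vW /eqP cv].
by apply/negP => /(hc u v uW vW); rewrite cu cv eqxx.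
Qed.

Lemma kempe_equiv_trans f g h :
  kempe_equiv e f g -> kempe_equiv e g h -> kempe_equiv e f h.
Proof. by elim=> // f1 g1 h1 hf1 hg1 sw _ IH /IH; apply: kempe_step. Qed.

Lemma kempe_equiv_eqfun h g : coloring e h -> h =1 g -> kempe_equiv e h g.
Proof. by move=> hh /functional_extensionality <-; apply: kempe_refl. Qed.

Definition disagree h g := [set v | h v != g v].

Lemma kempe_equiv_descent (Q : ('I_d -> 'I_k) -> Prop) g :
  (forall h, coloring e h -> Q h -> disagree h g != set0 ->
     exists h1, [/\ coloring e h1, kempe_equiv e h h1, Q h1
                  & #|disagree h1 g| < #|disagree h g|]) ->
  forall h, coloring e h -> Q h -> kempe_equiv e h g.
Proof.
move=> step h; have [N] := ubnP #|disagree h g|.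
elim: N h => // N IH h ltN hh Qh.
have [/setP D0 | D0] := eqVneq (disagree h g) set0.
  apply: kempe_equiv_eqfun => // v; apply/eqP.
  by have := D0 v; rewrite !inE => /negbFE.
have [h1 [hh1 hk Qh1 lt1]] := step h hh Qh D0.
by apply: kempe_equiv_trans hk (IH _ _ hh1 Qh1); apply: leq_trans lt1 _.
Qed.

Lemma component_sub A C : component_of e A C -> C \subset A.
Proof.
case=> v vA -> {C}; apply/subsetP => w; rewrite inE.
case/connectP=> p + ->; elim: p v vA => //= x p IH v vA /andP[/and3P[_ _ xA]].
exact: IH.
Qed.

Lemma component_closed A C x y :
  component_of e A C -> x \in C -> e x y -> y \in A -> y \in C.
Proof.
move=> cC xC exy yA; have /subsetP/(_ x xC) xA := component_sub cC.
case: cC xC => v _ ->; rewrite !inE => vx.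
by apply: connect_trans vx (connect1 _); rewrite /= exy xA yA.
Qed.

Definition kempe_recolor h i j C v :=
  if v \in C then (if h v == i then j else i) else h v.

Definition recoloring_within i j h h' :=
  forall v, h v != h' v -> (h v \in [:: i; j]) && (h' v \in [:: i; j]).

Lemma recoloring_withinC i j h h' :
  recoloring_within i j h h' -> recoloring_within j i h h'.
Proof. by move=> rw v /rw; rewrite !inE ![(_ == j) || _]orbC. Qed.

Lemma kempe_switch_recoloring_within f g :
  kempe_switch e f g -> exists i j, i != j /\ recoloring_within i j f g.
Proof.
case=> i [j [C [ltij cC gE]]]; exists i, j; split; first by rewrite neq_ltn ltij.
move=> v; rewrite gE; case: ifP => [vC _ | _]; last by rewrite eqxx.
have := subsetP (component_sub cC) v vC; rewrite !inE => ->.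
by case: (f v == i); rewrite eqxx ?orbT.
Qed.

Lemma cls_recoloring_within i j h h' l : recoloring_within i j h h' ->
  l != i -> l != j -> cls h l = cls h' l.
Proof.
move=> rw li lj; have ne c : c \in [:: i; j] -> (c == l) = false.
  by rewrite !inE => /orP[]/eqP->; apply/negbTE; rewrite eq_sym.
apply/setP => v; rewrite !inE.
by case: (eqVneq (h v) (h' v)) => [-> // | /rw/andP[hij h'ij]]; rewrite !ne.
Qed.

Lemma cls_union_recoloring_within i j h h' : recoloring_within i j h h' ->
  cls h i :|: cls h j = cls h' i :|: cls h' j.
Proof.
move=> rw; apply/setP => v; rewrite !inE.
by case: (eqVneq (h v) (h' v)) => [-> // | /rw]; rewrite !inE => /andP[-> ->].
Qed.

Definition recolor_pair h i j B0 B1 v :=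
  if v \in B0 then i else if v \in B1 then j else h v.

Lemma recolor_pairP h i j B0 B1 : i != j -> B0 :&: B1 = set0 ->
    B0 :|: B1 = cls h i :|: cls h j ->
  let h' := recolor_pair h i j B0 B1 in
  [/\ cls h' i = B0, cls h' j = B1 & recoloring_within i j h h'].
Proof.
move=> nij /setP dB /setP U h'.
have out v : v \notin B0 -> v \notin B1 -> (h v == i) = false /\ (h v == j) = false.
  move=> /negbTE vB0 /negbTE vB1; have := U v.
  by rewrite !inE vB0 vB1 => /esym/norP[/negbTE-> /negbTE->].
split.
- apply/setP => v; rewrite inE /h' /recolor_pair.
  case: ifPn => [_ | vB0]; first by rewrite eqxx.
  case: ifPn => [vB1 | vB1]; first by rewrite eq_sym (negbTE nij).
  by rewrite (out v vB0 vB1).1.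
- apply/setP => v; rewrite inE /h' /recolor_pair.
  case: ifPn => [vB0 | vB0].
    by rewrite (negbTE nij); have := dB v; rewrite !inE vB0 /= => ->.
  case: ifPn => [_ | vB1]; first by rewrite eqxx.
  by rewrite (out v vB0 vB1).2.
- move=> v; rewrite /h' /recolor_pair.
  have inU c : c \in B0 :|: B1 -> (h c == i) || (h c == j) by rewrite U !inE.
  case: ifPn => [vB0 | vB0]; last case: ifPn => [vB1 | vB1]; last by rewrite eqxx.
    by rewrite !inE eqxx inU // inE vB0.
  by rewrite !inE eqxx orbT inU // inE vB1 orbT.
Qed.

Hypothesis e_sym : forall u v, e u v = e v u.

Lemma coloring_kempe_recolor h i j C :
  coloring e h -> component_of e [set v | (h v == i) || (h v == j)] C ->
  coloring e (kempe_recolor h i j C).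
Proof.
move=> hh cC; have /subsetP CA := component_sub cC.
have across x y : e x y -> x \in C -> y \notin C ->
    (if h x == i then j else i) != h y.
  move=> exy xC; apply: contra => hy; apply: component_closed cC xC exy _.
  by rewrite inE; case: (h x == i) hy => /eqP <-; rewrite eqxx ?orbT.
move=> x y exy; rewrite /kempe_recolor.
case xC: (x \in C); case yC: (y \in C).
- have := hh x y exy; have := CA x xC; have := CA y yC; rewrite !inE.
  by case/orP=> /eqP-> /orP[]/eqP->; rewrite ?eqxx // eq_sym => ij;
     rewrite (negbTE ij) // eq_sym.
- by apply: across; rewrite ?yC.
- by rewrite eq_sym; apply: across; rewrite ?xC // e_sym.
- exact: hh.
Qed.

Lemma recoloring_within_disagree i j h h' x y :
    coloring e h -> coloring e h' -> recoloring_within i j h h' ->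
  e x y -> (h y == i) || (h y == j) -> h x != h' x -> h y != h' y.
Proof.
move=> hh hh' rw exy hyij hx; have /andP[hxij h'xij] := rw x hx.
apply/negP => /eqP hyy; have := hh' _ _ exy; rewrite -hyy.
(* h x, h' x and h y would be three distinct colors among i, j *)
move: hxij h'xij hyij hx (hh _ _ exy); rewrite !inE.
by case/orP=> /eqP-> /orP[]/eqP-> /orP[]/eqP->; rewrite ?eqxx.
Qed.

Lemma kempe_equiv_recoloring_within_lt i j h h' : (i < j)%N ->
    coloring e h -> coloring e h' -> recoloring_within i j h h' ->
  kempe_equiv e h h'.
Proof.
move=> ltij hh hh' rw.
apply: (kempe_equiv_descent (Q := recoloring_within i j ^~ h') _ hh rw).
move=> {hh rw} {}h hh rw /set0Pn[v]; rewrite inE => hv.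
pose A := [set w | (h w == i) || (h w == j)].
pose rA := [rel x y | [&& e x y, x \in A & y \in A]].
pose C := [set w | connect rA v w].
have cC : component_of e A C.
  by exists v => //; have /andP[] := rw v hv; rewrite !inE.
have C_disagree w : w \in C -> h w != h' w.
  have rA_sym x y : rA x y = rA y x.
    by rewrite /= [e x y]e_sym [(x \in A) && _]andbC.
  have rA_disagree x y : rA x y -> h x != h' x -> h y != h' y.
    by case/and3P=> exy _; rewrite inE; apply: recoloring_within_disagree.
  have clD : closed rA [pred w | h w != h' w].
    by move=> x y rxy; apply/idP/idP; apply: rA_disagree; rewrite // rA_sym.
  by rewrite inE => /(closed_connect clD); rewrite !inE => <-.
pose h1 := kempe_recolor h i j C.
have hh1 : coloring e h1 by apply: coloring_kempe_recolor.
have h1C w : w \in C -> h1 w = h' w.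
  move=> wC; have hw := C_disagree w wC; have /andP[] := rw w hw.
  rewrite /h1 /kempe_recolor wC !inE.
  case/orP=> /eqP hwE /orP[]/eqP h'wE; move: hw; rewrite hwE h'wE ?eqxx //.
  by move/negbTE->.
have h1nC w : w \notin C -> h1 w = h w by rewrite /h1 /kempe_recolor => /negbTE->.
exists h1; split => //.
- by apply: kempe_step hh hh1 _ (kempe_refl hh1); exists i, j, C.
- move=> w; case: (boolP (w \in C)) => [/h1C-> | /h1nC->]; last exact: rw.
  by rewrite eqxx.
- apply: proper_card; apply/properP; split.
    apply/subsetP => w; rewrite !inE.
    by case: (boolP (w \in C)) => [/h1C-> | /h1nC->]; rewrite ?eqxx.
  have vC : v \in C by rewrite inE connect0.
  by exists v; rewrite !inE ?h1C ?eqxx.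
Qed.

Lemma kempe_equiv_recoloring_within i j h h' :
    coloring e h -> coloring e h' -> recoloring_within i j h h' ->
  kempe_equiv e h h'.
Proof.
case: (ltngtP i j) => [ltij | ltji | /val_inj eij].
- exact: kempe_equiv_recoloring_within_lt.
- by move=> hh hh' /recoloring_withinC; apply: kempe_equiv_recoloring_within_lt.
move=> hh _ rw; apply: kempe_equiv_eqfun => // v; apply/eqP/negPn/negP => /[dup].
by move/rw; rewrite eij !inE !orbb => /andP[/eqP-> /eqP->]; rewrite eqxx.
Qed.

Lemma kempe_equiv_same_partition h g :
    coloring e h -> coloring e g -> (forall x y, (h x == h y) = (g x == g y)) ->
  kempe_equiv e h g.
Proof.
move=> hh hg part.
apply: (kempe_equiv_descent
  (Q := fun h => forall x y, (h x == h y) = (g x == g y)) _ hh part).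
move=> {hh part} {}h hh part /set0Pn[v]; rewrite inE => hv.
pose h1 w := tperm (h v) (g v) (h w).
have hh1 : coloring e h1 by move=> x y /hh; rewrite /h1 (inj_eq perm_inj).
exists h1; split => //.
- apply: (kempe_equiv_recoloring_within (i := h v) (j := g v)) => // w.
  by rewrite /h1 !inE; case: tpermP => [-> | -> |]; rewrite ?eqxx ?orbT.
- by move=> x y; rewrite /h1 (inj_eq perm_inj).
apply: proper_card; apply/properP; split.
  apply/subsetP => w; rewrite !inE; apply: contraNN => /eqP hwg.
  rewrite /h1; case: tpermP => [hwv | hwg' | _ _]; last by rewrite hwg.
    by rewrite eq_sym -part hwv.
  by rewrite -hwg eq_sym part -hwg hwg' eqxx.
by exists v; rewrite !inE /h1 ?tpermL ?eqxx.
Qed.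

End Colorings.

Lemma two_classes_partition d (W : {set 'I_d}) (c : 'I_d -> 'I_2) :
  [set v in W | c v == ord0] :&: [set v in W | c v == ord_max] = set0 /\
  [set v in W | c v == ord0] :|: [set v in W | c v == ord_max] = W.
Proof.
have max2 (x : 'I_2) : (x == ord_max) = (x != ord0) by case: x => [[|[|]]].
split; apply/setP => v; rewrite !inE max2;
by case: (c v == ord0); rewrite ?andbF ?andbT ?orbF.
Qed.

Local Open Scope ring_scope.

Definition asbool (P : Prop) : bool :=
  if excluded_middle_informative P then true else false.

Lemma asboolP (P : Prop) : reflect P (asbool P).
Proof. by rewrite /asbool; case: excluded_middle_informative => p; constructor. Qed.

Section Ideals.
Variable R : comNzRingType.
Implicit Type P : R -> Prop.

Lemma in_ideal0 P : in_ideal P 0.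
Proof.
by exists 0%N, (fun _ => 0), (fun _ => 0); split; [case | rewrite big_ord0].
Qed.

Lemma in_ideal_mull P c x : P x -> in_ideal P (c * x).
Proof. by exists 1%N, (fun _ => c), (fun _ => x); split; last rewrite big_ord1. Qed.

Lemma in_idealD P p q : in_ideal P p -> in_ideal P q -> in_ideal P (p + q).
Proof.
case=> n1 [c1 [g1 [P1 ->]]] [n2 [c2 [g2 [P2 ->]]]].
exists (n1 + n2)%N, (fun i => match split i with inl a => c1 a | inr b => c2 b end),
  (fun i => match split i with inl a => g1 a | inr b => g2 b end).
split; first by move=> i; case: (split i).
rewrite big_split_ord /=; congr (_ + _); apply: eq_bigr => i _.
  by rewrite (unsplitK (inl i)).
by rewrite (unsplitK (inr i)).
Qed.

End Ideals.

Lemma scalar_in_ideal_eq0 (K : fieldType) n (phi : {scalar {mpoly K[n]}})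
    (P : {mpoly K[n]} -> Prop) :
  (forall t p, P p -> phi ('X_[t] * p) = 0) ->
  forall p, in_ideal P p -> phi p = 0.
Proof.
move=> phiP _ [N [c [gs [Pgs ->]]]]; rewrite linear_sum big1 // => i _.
rewrite [c i]mpolyE mulr_suml linear_sum big1 // => t _.
by rewrite -scalerAl linearZ /= phiP ?mulr0.
Qed.

Section Monomials.
Variables (K : fieldType) (d k : nat) (e : rel 'I_d).
Implicit Types (f g h : 'I_d -> 'I_k) (i j l : 'I_k) (A B W : {set 'I_d}).
Local Notation n := #|{: stab e}|.

Definition var_index A : 'I_n :=
  enum_rank (insubd (exist _ set0 (stable0 e) : stab e) A).

Lemma xS_var_index A : stable e A -> xS K e A = 'X_[U_(var_index A)].
Proof.
move=> sA; rewrite /xS /var_index insubT; congr 'X_[U_(enum_rank _)].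
by apply: val_inj; rewrite val_insubd sA.
Qed.

Lemma var_index_inj A B :
  stable e A -> stable e B -> var_index A = var_index B -> A = B.
Proof.
by move=> sA sB /enum_rank_inj /(congr1 val); rewrite !val_insubd sA sB.
Qed.

Definition color_mono h : 'X_{1..n} := (\sum_(l < k) U_(var_index (cls h l)))%MM.

Lemma xmon_color_mono h : coloring e h -> xmon K e h = 'X_[color_mono h].
Proof.
move=> /coloringP sh; rewrite /xmon /color_mono -mprodXE.
by apply: eq_bigr => l _; apply/xS_var_index/sh.
Qed.

Lemma mdeg_color_mono h : mdeg (color_mono h) = k.
Proof.
rewrite /color_mono mdeg_sum (eq_bigr (fun _ => 1%N)) => [|l _]; last exact: mdeg1.
by rewrite sum1_card card_ord.
Qed.

Lemma color_mono_cls h A : coloring e h -> stable e A ->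
  (0 < color_mono h (var_index A))%N -> exists l, cls h l = A.
Proof.
move=> /coloringP sh sA; rewrite /color_mono mnm_sumE.
have [l /eqP <- | noA] := pickP (fun l => cls h l == A); first by exists l.
rewrite big1 // => l _; rewrite mnm1E; apply/eqP; rewrite eqb0.
by apply: contraFN (noA l) => /eqP /var_index_inj -> //.
Qed.

Lemma same_partition_of_color_mono h g : coloring e h -> coloring e g ->
  color_mono h = color_mono g -> forall x y, (h x == h y) = (g x == g y).
Proof.
move=> hh hg hgE.
have clsE x : cls g (g x) = cls h (h x).
  have [l hl] : exists l, cls h l = cls g (g x).
    apply: (color_mono_cls hh); first by move/coloringP: hg.
    by rewrite hgE /color_mono mnm_sumE (bigD1 (g x)) //= mnm1E eqxx.
  have : x \in cls h l by rewrite hl inE.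
  by rewrite inE => /eqP hx; rewrite -hl hx.
move=> x y; have /setP/(_ y) := clsE x; rewrite !inE => E.
by rewrite eq_sym -E eq_sym.
Qed.

Lemma color_mono_split h i j : i != j ->
  color_mono h = (U_(var_index (cls h i)) + (U_(var_index (cls h j)) +
    \sum_(l | (l != i) && (l != j)) U_(var_index (cls h l))))%MM.
Proof. by move=> nij; rewrite /color_mono (bigD1 i) //= (bigD1 j) //= eq_sym. Qed.

Lemma color_mono_recoloring_within i j h h' : i != j ->
    recoloring_within i j h h' ->
  (color_mono h + (U_(var_index (cls h' i)) + U_(var_index (cls h' j))) =
   color_mono h' + (U_(var_index (cls h i)) + U_(var_index (cls h j))))%MM.
Proof.
move=> nij rw; rewrite !(color_mono_split _ nij).
rewrite (eq_bigr (fun l => U_(var_index (cls h' l)))%MM); last first.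
  by move=> l /andP[li lj]; rewrite (cls_recoloring_within rw li lj).
set rest := (\sum_(l | _) _)%MM.
by apply/mnmP => x; rewrite !mnmDE; lia.
Qed.

Definition kempe_monomial f (m : 'X_{1..n}) :=
  exists h, [/\ coloring e h, kempe_equiv e f h & color_mono h = m].

Hypothesis e_sym : forall u v, e u v = e v u.

Lemma kempe_monomial_exchange f t A0 A1 B0 B1 :
    stable e A0 -> stable e A1 -> stable e B0 -> stable e B1 ->
    A0 :&: A1 = set0 -> B0 :&: B1 = set0 -> A0 :|: A1 = B0 :|: B1 ->
  kempe_monomial f (t + (U_(var_index A0) + U_(var_index A1)))%MM ->
  kempe_monomial f (t + (U_(var_index B0) + U_(var_index B1)))%MM.
Proof.
move=> sA0 sA1 sB0 sB1 dA dB U [h [hh fh hE]].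
have [eA | nA] := eqVneq A0 A1.
  have A0E : A0 = set0 by rewrite -dA eA setIid.
  move/esym/eqP: U; rewrite -eA A0E setU0 setU_eq0 => /andP[/eqP-> /eqP->].
  by exists h; rewrite hE -eA A0E.
have [i hi] : exists i, cls h i = A0.
  apply: color_mono_cls sA0 _ => //.
  by rewrite hE !mnmDE ltn_addl // ltn_addr // mnm1E eqxx.
have [j hj] : exists j, cls h j = A1.
  apply: color_mono_cls sA1 _ => //.
  by rewrite hE !mnmDE ltn_addl // ltn_addl // mnm1E eqxx.
have nij : i != j by apply: contraNneq nA => eij; rewrite -hi -hj eij.
have W : B0 :|: B1 = cls h i :|: cls h j by rewrite -U hi hj.
have [h'i h'j rw] := recolor_pairP nij dB W.
set h' := recolor_pair h i j B0 B1 in h'i h'j rw.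
have hh' : coloring e h'.
  apply/coloringP => l; have [-> | li] := eqVneq l i; first by rewrite h'i.
  have [-> | lj] := eqVneq l j; first by rewrite h'j.
  by rewrite -(cls_recoloring_within rw li lj); move/coloringP: hh.
exists h'; split => //.
  exact: kempe_equiv_trans fh (kempe_equiv_recoloring_within e_sym hh hh' rw).
apply: (@addIm _ (U_(var_index A0) + U_(var_index A1))%MM).
rewrite -hi -hj -(color_mono_recoloring_within nij rw) hE hi hj h'i h'j.
by apply/mnmP => x; rewrite !mnmDE; lia.
Qed.

(* Every x_h has degree k, so summing over the monomials of degree at most k
   loses none of them. *)
Definition kempe_functional f (p : RG K e) : K :=
  \sum_(m : 'X_{1..n < k.+1} | asbool (kempe_monomial f m)) p@_m.

Lemma kempe_functional_is_scalar f : scalar (kempe_functional f).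
Proof.
move=> a p q; rewrite /kempe_functional mulr_sumr -big_split.
by apply: eq_bigr => m _; rewrite mcoeffD mcoeffZ.
Qed.

HB.instance Definition _ f := GRing.isLinear.Build K (RG K e) K *%R
  (kempe_functional f) (kempe_functional_is_scalar f).

Lemma kempe_functionalX f m :
  kempe_functional f 'X_[m] = (asbool (kempe_monomial f m))%:R.
Proof.
case: asboolP => [km | nkm]; last first.
  apply: big1 => m' /asboolP km'; rewrite mcoeffX; case: eqP => // eqm.
  by rewrite eqm in nkm.
have dm : (mdeg m < k.+1)%N by case: km => h [_ _ <-]; rewrite mdeg_color_mono.
rewrite /kempe_functional (bigD1 (BMultinom dm)) /=; last exact/asboolP.
rewrite mcoeffX eqxx big1 ?addr0 // => m' /andP[_ ne]; rewrite mcoeffX.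
by case: eqP => // eqm; move: ne; rewrite -(inj_eq val_inj) /= eqm eqxx.
Qed.

Lemma xmon_on_2 W (c : 'I_d -> 'I_2) : coloring_on e W c ->
  xmon_on K e W c = 'X_[U_(var_index [set v in W | c v == ord0]) +
                       U_(var_index [set v in W | c v == ord_max])].
Proof.
move=> hc; have -> : ord_max = lift ord0 (ord0 : 'I_1) by apply: val_inj.
by rewrite /xmon_on big_ord_recl big_ord1 mpolyXD !xS_var_index //;
  apply: stable_coloring_on.
Qed.

Lemma kempe_functional_J_gens f t p :
  J_gens K e p -> kempe_functional f ('X_[t] * p) = 0.
Proof.
case=> W [c [c' [hc hc' ->]]].
rewrite !xmon_on_2 // mulrBr -!mpolyXD raddfB /= !kempe_functionalX.
apply/eqP; rewrite subr_eq0; apply/eqP; congr (nat_of_bool _)%:R.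
have [dc Uc] := two_classes_partition W c.
have [dc' Uc'] := two_classes_partition W c'.
have sc := stable_coloring_on _ hc; have sc' := stable_coloring_on _ hc'.
by apply/asboolP/asboolP; apply: kempe_monomial_exchange; rewrite ?Uc ?Uc'.
Qed.

Lemma kempe_functional_J_G f p : J_G K e p -> kempe_functional f p = 0.
Proof. by apply: scalar_in_ideal_eq0 => t; apply: kempe_functional_J_gens. Qed.

Definition two_coloring h i : 'I_d -> 'I_2 :=
  fun v => if h v == i then ord0 else ord_max.

Lemma coloring_on_two_coloring h i j :
  coloring e h -> coloring_on e (cls h i :|: cls h j) (two_coloring h i).
Proof.
move=> hh u v; rewrite !inE /two_coloring => uW vW /hh huv.
have [hu | hu] := eqVneq (h u) i; have [hv | hv] := eqVneq (h v) i => //.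
  by rewrite hu hv eqxx in huv.
move: uW vW huv; rewrite (negbTE hu) (negbTE hv) /=.
by move=> /eqP-> /eqP->; rewrite eqxx.
Qed.

Lemma xmon_on_two_coloring h i j : i != j -> coloring e h ->
  xmon_on K e (cls h i :|: cls h j) (two_coloring h i) =
  'X_[U_(var_index (cls h i)) + U_(var_index (cls h j))].
Proof.
move=> nij hh; rewrite xmon_on_2; last exact: coloring_on_two_coloring.
congr 'X_[U_(var_index _) + U_(var_index _)]; apply/setP => v;
  rewrite !inE /two_coloring; have [-> | _] := eqVneq (h v) i;
  by rewrite /= ?andbT ?andbF // eq_sym (negbTE nij).
Qed.

Lemma J_G_recoloring_within h h' i j : i != j ->
    coloring e h -> coloring e h' -> recoloring_within i j h h' ->
  J_G K e (xmon K e h - xmon K e h').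
Proof.
move=> nij hh hh' rw; rewrite !xmon_color_mono // !(color_mono_split _ nij).
rewrite [in X in _ - X](eq_bigr (fun l => U_(var_index (cls h l)))%MM); last first.
  by move=> l /andP[li lj]; rewrite (cls_recoloring_within rw li lj).
rewrite !addmA !(@mpolyXD _ _ (_ + _)%MM) -mulrBl mulrC.
rewrite -(xmon_on_two_coloring nij hh) -(xmon_on_two_coloring nij hh').
rewrite -(cls_union_recoloring_within rw); apply: in_ideal_mull.
exists (cls h i :|: cls h j), (two_coloring h i), (two_coloring h' i).
split=> //; first exact: coloring_on_two_coloring.
by rewrite (cls_union_recoloring_within rw); apply: coloring_on_two_coloring.
Qed.

End Monomials.

Theorem theorem1p1 (K : fieldType) (d : nat) (e : rel 'I_d)
  (e_sym : forall u v, e u v = e v u) (e_irr : irreflexive e) (k : nat) (hk : (0 < k)%N)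
  (f g : 'I_d -> 'I_k) (hf : coloring e f) (hg : coloring e g) :
  kempe_equiv e f g <-> J_G K e (xmon K e f - xmon K e g).
Proof.
split.
  elim=> [h _ | h1 h2 h3 hh1 hh2 sw _ IH]; first by rewrite subrr; apply: in_ideal0.
  rewrite -(subrKA (xmon K e h2)); apply: in_idealD IH.
  have [i [j [nij rw]]] := kempe_switch_recoloring_within sw.
  exact: J_G_recoloring_within nij hh1 hh2 rw.
move=> /(kempe_functional_J_G e_sym f); rewrite raddfB /= !xmon_color_mono //.
have /asboolP kf : kempe_monomial f (color_mono e f).
  by exists f; split=> //; apply: kempe_refl.
rewrite !kempe_functionalX kf; case: asboolP => [[h [hh fh hgE]] _ | _]; last first.
  by rewrite subr0 => /eqP; rewrite oner_eq0.
apply: kempe_equiv_trans fh (kempe_equiv_same_partition e_sym hh hg _).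
exact: same_partition_of_color_mono hh hg hgE.
Qed.
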